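(* Let $V$ be a set of $n$ vertices, $k$ a positive integer, $u,w\in V$ distinct, and $V_{uw}\subseteq V\setminus\{u,w\}$ a set of $k$ vertices partitioned as $V_{uw}=V_u\cup V_w$ with $V_u=\{v_1,\ldots,v_s\}$ and $V_w=\{v_{s+1},\ldots,v_k\}$. Let $t$ be a spanning tree of the complete graph on $V$ with at most $k$ leaves (vertices of degree $1$) such that each vertex of $V_u$ is adjacent in $t$ only to $u$, and each vertex of $V_w$ is adjacent in $t$ only to $w$. Let $t_h$ be the graph obtained from $t$ by deleting the vertices $v_1,\ldots,v_k$ together with their incident edges. Then $t_h$ is a Hamiltonian path on the $n-k$ vertices of $V\setminus V_{uw}$. *)

From mathcomp Require Import all_boot.
Set Implicit Arguments. Unset Strict Implicit. Unset Printing Implicit Defensive.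

Section Graphs.
Variable T : finType.

Definition simple_graph (e : rel T) : Prop := symmetric e /\ irreflexive e.

Definition nbhd (e : rel T) (x : T) : {set T} := [set y | e x y].
Definition deg (e : rel T) (x : T) : nat := #|nbhd e x|.

Definition leaves (e : rel T) : {set T} := [set x | deg e x == 1].

Definition gconnected (e : rel T) : Prop := forall x y, connect e x y.

Definition has_cycle (e : rel T) : Prop :=
  exists c : seq T, [/\ 3 <= size c, uniq c & cycle e c].

(* a tree (= spanning tree of the complete graph on T) *)
Definition is_tree (e : rel T) : Prop :=
  simple_graph e /\ gconnected e /\ ~ has_cycle e.

(* induced subgraph on S : edges of e with both endpoints in S
   (= delete the vertices outside S with their incident edges) *)
Definition induced (e : rel T) (S : {set T}) : rel T :=
  fun x y => [&& x \in S, y \in S & e x y].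

Definition consec (p : seq T) (x y : T) : bool :=
  ((x, y) \in zip p (behead p)) || ((y, x) \in zip p (behead p)).

Definition is_ham_path (e : rel T) (S : {set T}) : Prop :=
  exists p : seq T,
    [/\ uniq p, S =i p,
        (forall x y, e x y -> x \in S /\ y \in S) &
        (forall x y, x \in S -> y \in S -> e x y = consec p x y)].

End Graphs.

From mathcomp Require Import all_boot.

Set Implicit Arguments. Unset Strict Implicit. Unset Printing Implicit Defensive.

(* Each vertex of V = Vu :|: Vw has a single neighbour, u or w, so V consists
   of leaves of t; as t has at most #|V| leaves, every other vertex has degree
   at least 2, and its neighbours avoid V unless it is u or w.  Hence the
   forest h induced on S = ~: V is connected and its vertices other than u
   and w have degree at least 2.  In an acyclic graph paths are unique and a
   path that cannot be extended backwards starts at a vertex of degree at most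
   1; extending a path from x to w in h this way gives a path from u to w
   through x, so every vertex of S lies on the unique u-w path, and a chord of
   that path would close a cycle. *)

Section Degree.
Variables (T : finType) (e : rel T).

Lemma deg_gt1 x a b : e x a -> e x b -> a != b -> 1 < deg e x.
Proof.
by move=> exa exb a_neq_b; apply/card_gt1P; exists a, b; rewrite !inE.
Qed.

Lemma deg_le1 x c : (forall y, e x y -> y = c) -> deg e x <= 1.
Proof.
by move=> exc; apply/card_le1_eqP => a b; rewrite !inE => /exc-> /exc->.
Qed.

Lemma connect_deg_gt0 x y : connect e x y -> x != y -> 0 < deg e x.
Proof.
case/connectP => [[|z p]] /= => [_ -> | /andP[exz _] _ _].
  by rewrite eqxx.
by apply/card_gt0P; exists z; rewrite inE.
Qed.

End Degree.

Section Paths.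
Variables (T : finType) (e : rel T).

Lemma connect_uniq_path x y :
  connect e x y -> exists p, [/\ path e x p, uniq (x :: p) & last x p = y].
Proof. by case/connectP => p /shortenP[p' ? ? _] ->; exists p'. Qed.

Lemma path_inducedE (S : {set T}) x p :
  x \in S -> path (induced e S) x p = all (mem S) p && path e x p.
Proof.
elim: p x => //= y p IH x xS; rewrite /induced xS /=.
by case yS: (y \in S); rewrite //= IH // andbCA.
Qed.

Hypothesis e_sym : symmetric e.

Lemma path_consec x p a b : path e x p -> consec (x :: p) a b -> e a b.
Proof.
elim: p x => [|c p IH] x //= /andP[exc cp].
rewrite /consec /= !in_cons.
case/orP => [/orP[/eqP[-> ->] // | ab] | /orP[/eqP[-> ->] | ba]].
- by apply: IH cp _; rewrite /consec ab.
- by rewrite e_sym.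
- by apply: IH cp _; rewrite /consec ba orbT.
Qed.

Lemma uniq_path_avoid_pendants (S : {set T}) x p :
  (forall v, v \notin S -> deg e v <= 1) ->
  x \in S -> last x p \in S -> path e x p -> uniq (x :: p) -> all (mem S) p.
Proof.
move=> degS; elim: p x => [|y p IH] x //= xS lastS /andP[exy yp] /andP[xNyp up].
have [yS | yNS] := boolP (y \in S); first exact: (IH y).
case: p lastS yp up xNyp {IH} => [|z p] /=; first by rewrite (negPf yNS).
move=> _ /andP[eyz _] _; rewrite !inE negb_or => /andP[_ /norP[xNz _]].
by have := degS y yNS; rewrite leqNgt (@deg_gt1 _ _ y x z) // e_sym.
Qed.

End Paths.

Section Acyclic.
Variables (T : finType) (e : rel T).
Hypothesis e_sym : symmetric e.

Lemma path_meet_has_cycle x p q :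
  path e x p -> path e x q -> uniq (x :: p) -> uniq (x :: q) ->
  has (mem q) p -> head x p != head x q -> has_cycle e.
Proof.
(* The cycle runs from x along p to its first vertex z on q, then back along
   q to x. *)
move=> xp xq up uq pq; case: (split_find pq) xp up => z p1 p2 zq p1Nq xp up.
case/splitPr: zq xq uq p1Nq => q1 q2 xq uq p1Nq head_neq.
exists (x :: rcons p1 z ++ rev q1); split.
- rewrite /= size_cat size_rcons size_rev.
  by case: p1 q1 head_neq {xp up xq uq p1Nq} => [|? ?] [|? ?] //=; rewrite eqxx.
- move: up uq; rewrite /= !mem_cat !mem_rcons mem_rev !inE !negb_or.
  rewrite !cat_uniq rcons_uniq rev_uniq has_rev /=.
  move=> /and4P[/andP[/andP[-> ->] _] -> _ _].
  move=> /and5P[/and3P[-> _ _] -> /norP[zNq1 _] _ _].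
  rewrite andbT /= has_sym has_rcons negb_or zNq1 /= andbT.
  apply: contra p1Nq.
  by apply: sub_has => y /=; rewrite mem_cat => ->.
- rewrite /= rcons_cat cat_path last_rcons.
  move: xp xq; rewrite !cat_path /= => /andP[-> _] /andP[xq1 /andP[xq2 _]] /=.
  have e_rev : (fun a b => e b a) =2 e by move=> a b; exact: e_sym.
  have := rev_path e x (rcons q1 z).
  rewrite last_rcons belast_rcons rev_cons => ->.
  by rewrite (eq_path e_rev) rcons_path xq1 xq2.
Qed.

Hypothesis e_irr : irreflexive e.
Hypothesis e_acyclic : ~ has_cycle e.

Lemma acyclic_path_uniq x p q :
  path e x p -> path e x q -> uniq (x :: p) -> uniq (x :: q) ->
  last x p = last x q -> p = q.
Proof.
elim: p x q => [|a p IH] x [|b q] //= xp xq up uq lastE.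
- by move: uq; rewrite lastE mem_last.
- by move: up; rewrite -lastE mem_last.
have [a_eq_b | a_neq_b] := eqVneq a b.
  subst b; move: xp xq up uq => /andP[_ ap] /andP[_ aq] /andP[_ up] /andP[_ uq].
  by congr (_ :: _); exact: IH ap aq up uq lastE.
case: e_acyclic; apply: (@path_meet_has_cycle x (a :: p) (b :: q)) => //.
apply/hasP; exists (last a p); first exact: mem_last.
by rewrite lastE; exact: mem_last.
Qed.

Lemma acyclic_nbhd_head y q z :
  path e y q -> uniq (y :: q) -> e y z -> z \in q -> z = head y q.
Proof.
move=> yq uq eyz zq; apply/eqP; apply: contraT => z_neq_head; case: e_acyclic.
have y_neq_z : y != z by apply: contraTneq zq => <-; case/andP: uq.
apply: (@path_meet_has_cycle y q [:: z]) => //=; rewrite ?eyz ?inE ?y_neq_z //.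
  by apply/hasP; exists z; rewrite ?inE.
by rewrite eq_sym.
Qed.

Lemma acyclic_path_consec x p a b :
  path e x p -> uniq (x :: p) -> a \in x :: p -> b \in x :: p -> e a b ->
  consec (x :: p) a b.
Proof.
have consecC s c d : consec s c d = consec s d c by rewrite /consec orbC.
elim: p x => [|c p IH] x xp up.
  by rewrite !inE => /eqP-> /eqP->; rewrite e_irr.
have head_edge d : d \in x :: c :: p -> e x d -> consec (x :: c :: p) x d.
  move=> dxp exd; have dp : d \in c :: p.
    move: dxp; rewrite in_cons => /predU1P[dx|//].
    by move: exd; rewrite dx e_irr.
  by rewrite (acyclic_nbhd_head xp up exd dp) /consec /= in_cons eqxx.
have [-> | a_neq_x] := eqVneq a x; first by move=> _; exact: head_edge.
have [-> | b_neq_x] := eqVneq b x.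
  by move=> ap _ eax; rewrite consecC; apply: head_edge; rewrite // e_sym.
rewrite !in_cons (negPf a_neq_x) (negPf b_neq_x) /= => ap bp eab.
case/andP: xp => _ cp; case/andP: up => _ ucp.
move: (IH c cp ucp ap bp eab); rewrite /consec /= !in_cons.
by case/orP => ->; rewrite !orbT.
Qed.

Lemma acyclic_path_extend x p :
  path e x p -> uniq (x :: p) ->
  exists y q, [/\ path e y q, uniq (y :: q), last y q = last x p,
                  {subset x :: p <= y :: q} & deg e y <= 1].
Proof.
have [m] := ubnP (#|T| - size p); elim: m x p => // m IH x p lt_m xp up.
case: (pickP [pred z | e x z && (z \notin x :: p)]).
  move=> z /andP[exz zNxp].
  have zxp : path e z (x :: p) by rewrite /= e_sym exz.
  have uz : uniq (z :: x :: p) by rewrite cons_uniq zNxp up.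
  have [|y [q [yq uq lastE sub degy]]] := IH z (x :: p) _ zxp uz.
    have : size (z :: x :: p) <= #|T| by rewrite -(card_uniqP uz) max_card.
    by move=> /= lt_p_T; rewrite subnS -ltnS prednK // subn_gt0 ltnW.
  by exists y, q; split => // v vxp; apply: sub; rewrite in_cons vxp orbT.
move=> all_in; exists x, p; split => //.
apply: (deg_le1 (c := head x p)) => z exz.
apply: acyclic_nbhd_head => //.
move: (all_in z); rewrite /= exz /= in_cons => /negbFE.
by case/predU1P => // zx; move: exz; rewrite zx e_irr.
Qed.

End Acyclic.

Section Induced.
Variables (T : finType) (e : rel T) (S : {set T}).

Lemma induced_sym : symmetric e -> symmetric (induced e S).
Proof. by move=> e_sym x y; rewrite /induced e_sym andbCA. Qed.

Lemma induced_irr : irreflexive e -> irreflexive (induced e S).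
Proof. by move=> e_irr x; rewrite /induced e_irr !andbF. Qed.

Lemma induced_acyclic : ~ has_cycle e -> ~ has_cycle (induced e S).
Proof.
move=> e_acyclic [c [c_size c_uniq c_cycle]]; apply: e_acyclic.
exists c; split => //.
by apply: sub_cycle c_cycle => x y /and3P[].
Qed.

End Induced.

Section SpanningTree.
Variables (T : finType) (u w : T) (Vu Vw : {set T}) (t : rel T).
Hypotheses (u_notin : u \notin Vu :|: Vw) (w_notin : w \notin Vu :|: Vw).
Hypotheses (t_sym : symmetric t) (t_irr : irreflexive t).
Hypotheses (t_conn : gconnected t) (t_acyclic : ~ has_cycle t).
Hypothesis leaves_le : #|leaves t| <= #|Vu :|: Vw|.
Hypothesis Vu_nbhd : forall v, v \in Vu -> forall y, t v y -> y = u.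
Hypothesis Vw_nbhd : forall v, v \in Vw -> forall y, t v y -> y = w.

Local Notation V := (Vu :|: Vw).
Local Notation S := (~: V).
Local Notation h := (induced t S).

Fact u_in_S : u \in S. Proof. by rewrite inE. Qed.
Fact w_in_S : w \in S. Proof. by rewrite inE. Qed.

Fact h_sym : symmetric h. Proof. exact: induced_sym. Qed.
Fact h_irr : irreflexive h. Proof. exact: induced_irr. Qed.
Fact h_acyclic : ~ has_cycle h. Proof. exact: induced_acyclic. Qed.

Lemma V_nbhd v :
  v \in V -> exists2 c, (c == u) || (c == w) & forall y, t v y -> y = c.
Proof.
by rewrite inE => /orP[vVu | vVw]; [exists u; rewrite ?eqxx // => y /Vu_nbhd-> |
  exists w; rewrite ?eqxx ?orbT // => y /Vw_nbhd->].
Qed.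

Lemma deg_V v : v \in V -> deg t v = 1.
Proof.
move=> vV; have [c c_uw vc] := V_nbhd vV.
have cS : c \in S by case/orP: c_uw => /eqP->; [exact: u_in_S | exact: w_in_S].
have v_neq_c : v != c by apply: contraTneq cS => <-; rewrite inE negbK.
apply/eqP; rewrite eqn_leq (deg_le1 vc).
exact: connect_deg_gt0 (t_conn v c) v_neq_c.
Qed.

Lemma leaves_eq_V : leaves t = V.
Proof.
apply/eqP; rewrite eq_sym eqEcard leaves_le andbT.
by apply/subsetP => v /deg_V vdeg; rewrite inE vdeg.
Qed.

Lemma deg_induced_gt1 x : x \in S -> x != u -> x != w -> 1 < deg h x.
Proof.
move=> xS xNu xNw.
have nbhd_h : nbhd h x = nbhd t x.
  apply/setP => y; rewrite !inE /induced xS /= in_setC.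
  have [yV | //] := boolP (y \in V); apply/esym/negbTE/negP => txy.
  have [c c_uw yc] := V_nbhd yV.
  by move: c_uw; rewrite -(yc x) 1?t_sym // (negPf xNu) (negPf xNw).
have : x \notin leaves t by rewrite leaves_eq_V -in_setC.
rewrite /deg nbhd_h inE -/(deg t x).
have := connect_deg_gt0 (t_conn x u) xNu.
by case: (deg t x) => [|[|]].
Qed.

Lemma connect_induced x y : x \in S -> y \in S -> connect h x y.
Proof.
move=> xS yS; have [p [tp up lastp]] := connect_uniq_path (t_conn x y).
have deg_notin v : v \notin S -> deg t v <= 1 by rewrite inE negbK => /deg_V->.
apply/connectP; exists p => //; rewrite path_inducedE // tp andbT.
have lastS : last x p \in S by rewrite lastp.
exact: (uniq_path_avoid_pendants t_sym deg_notin xS lastS tp up).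
Qed.

Lemma uw_path_covers s :
  path h u s -> uniq (u :: s) -> last u s = w -> S =i u :: s.
Proof.
move=> hs us lasts x; apply/idP/idP => [xS | ]; last first.
  rewrite in_cons => /predU1P[-> | xs]; first exact: u_in_S.
  by move: hs; rewrite path_inducedE ?u_in_S // => /andP[/allP/(_ x xs)].
have [-> | xNw] := eqVneq x w; first by rewrite -lasts mem_last.
have [r [hr ur lastr]] := connect_uniq_path (connect_induced xS w_in_S).
have [y [q [hq uq lastq sub degy]]] :=
  acyclic_path_extend h_sym h_irr h_acyclic hr ur.
have xq : x \in y :: q by apply: sub; exact: mem_head.
have w_in_q : w \in q.
  rewrite lastr in lastq.
  case: q hq uq lastq sub xq => [_ _ /= -> _ | z q _ _ <- _ _].
    by rewrite inE (negPf xNw).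
  exact: (mem_last z q).
have yS : y \in S.
  by case: q hq w_in_q {uq lastq sub xq} => [|z q /andP[/and3P[]]].
have y_eq_u : y = u.
  apply/eqP; apply: contraTT degy => yNu; rewrite -ltnNge deg_induced_gt1 //.
  by apply: contraTneq w_in_q => <-; case/andP: uq.
subst y; rewrite (acyclic_path_uniq h_sym h_acyclic hs hq us uq) //.
by rewrite lasts lastq.
Qed.

Lemma induced_ham_path : is_ham_path h S.
Proof.
have [s [hs us lasts]] := connect_uniq_path (connect_induced u_in_S w_in_S).
have cover := uw_path_covers hs us lasts.
exists (u :: s); split => //; first by move=> x y /and3P[].
move=> x y xS yS; apply/idP/idP => [hxy | ]; last first.
  exact: (path_consec h_sym hs).
apply: (acyclic_path_consec h_sym h_irr h_acyclic hs us) => //.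
all: by rewrite -cover.
Qed.

End SpanningTree.

Theorem lemma2 (T : finType) (n k : nat) (u w : T) (Vu Vw : {set T})
  (t : rel T) :
  #|T| = n ->
  0 < k ->
  u != w ->
  [disjoint Vu & Vw] ->
  u \notin Vu :|: Vw -> w \notin Vu :|: Vw ->
  #|Vu :|: Vw| = k ->
  is_tree t ->
  #|leaves t| <= k ->
  (forall v, v \in Vu -> forall y, t v y -> y = u) ->
  (forall v, v \in Vw -> forall y, t v y -> y = w) ->
  #|~: (Vu :|: Vw)| = n - k /\
  is_ham_path (induced t (~: (Vu :|: Vw))) (~: (Vu :|: Vw)).
Proof.
move=> card_T _ _ _ u_notin w_notin card_V [[t_sym t_irr] [t_conn t_acyclic]].
rewrite -card_V => leaves_le Vu_nbhd Vw_nbhd; split.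
  by rewrite -card_T -(cardsC (Vu :|: Vw)) addKn.
exact: (induced_ham_path u_notin w_notin t_sym t_irr t_conn t_acyclic
          leaves_le Vu_nbhd Vw_nbhd).
Qed.
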